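(* Assume the standing setting below. Let $\psi:(0,\infty)\to(0,\infty)$ be nonincreasing, bounded, and slowly varying (for each $K>0$ there are constants $0<c_K\le C_K$ with $c_K\psi(q)\le\psi(Kq)\le C_K\psi(q)$ for all $q$). Put $\Psi(t):=-\log\psi(e^t)$. Then a point $x=\pi(\omega)\in J$ is badly symbolically approximable with respect to $\psi$ if and only if there exists $K<\infty$ such that for every $\ell\in\mathbb{N}$ and every finite word $\eta$ of length $r$ which occurs at two distinct positions (possibly overlapping) in the initial segment $\omega_1^\ell=(\omega_1,\dots,\omega_\ell)$, we have \[ \ell_{\mathrm p}(\eta)\le K+\Psi\big(\ell_{\mathrm p}(\omega_1^{\ell-r})\big). \]
   Context: Standing setting: $(u_a)_{a\in E}$ is a rational IFS on $\mathbb{R}$, $u_a(x)=\frac{p_a}{q_a}x+\frac{r_a}{q_a}$ with $p_a\in\{\pm1\}$, $r_a\in\mathbb{Z}$, $q_a\in\mathbb{N}$, $q_a\ge2$, satisfying the strong separation condition: there is a closed interval $I$ such that the sets $u_a(I)$, $a\in E$, are pairwise disjoint subsets of $I$. $\pi(\omega)=\lim_n u_{\omega_1}\circ\cdots\circ u_{\omega_n}(0)$ is the coding map (a bijection onto the limit set $J$), and every rational in $J$ has an eventually periodic coding. Intrinsic denominator: for $p/q\in\mathbb{Q}\cap J$ with coding $\omega$, let $n\ge0$ be minimal such that $(\omega_{i})_{i>n}$ is periodic and $m\ge1$ its minimal period; set $q_{(1)}=\prod_{i=1}^n q_{\omega_i}$, $q_{(2)}=\prod_{i=1}^m q_{\omega_{n+i}}$,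 $p_{(2)}=\prod_{i=1}^m p_{\omega_{n+i}}$, and $q_{\mathrm{int}}:=q_{(1)}(q_{(2)}-p_{(2)})$. A point $x\in J$ is badly symbolically approximable w.r.t. $\psi$ if there is $\varepsilon>0$ such that $|x-p/q|\ge\varepsilon\psi(q_{\mathrm{int}})/q_{\mathrm{int}}$ for all $p/q\in\mathbb{Q}\cap J$; otherwise symbolically well approximable. The pseudolength of a finite word $\eta=(\eta_1,\dots,\eta_r)$ is $\ell_{\mathrm p}(\eta)=\sum_{i=1}^r\log q_{\eta_i}$. *)

From Stdlib Require Import Reals Lra Lia ZArith Arith.
Open Scope R_scope.

(* Infinite words are functions w : nat -> nat with w i < N; the paper's
   omega_1, omega_2, ... is w 0, w 1, ... (0-indexed). *)

Definition u (p r : nat -> Z) (q : nat -> nat) (a : nat) (x : R) : R :=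
  (IZR (p a) * x + IZR (r a)) / INR (q a).

Definition rational_IFS_SSC (N : nat) (p r : nat -> Z) (q : nat -> nat) : Prop :=
  (forall a, (a < N)%nat -> (p a = 1%Z \/ p a = (-1)%Z) /\ (2 <= q a)%nat) /\
  exists lo hi : R, lo <= hi /\
    (forall a, (a < N)%nat -> forall x, lo <= x <= hi ->
        lo <= u p r q a x <= hi) /\
    (forall a b, (a < N)%nat -> (b < N)%nat -> a <> b ->
        forall x y, lo <= x <= hi -> lo <= y <= hi -> u p r q a x <> u p r q b y).

Definition valid_word (N : nat) (w : nat -> nat) : Prop := forall i, (w i < N)%nat.

(* u_{w 0} o u_{w 1} o ... o u_{w (n-1)} applied to x *)
Fixpoint comp (p r : nat -> Z) (q : nat -> nat) (w : nat -> nat) (n : nat) (x : R) : R :=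
  match n with
  | O => x
  | S k => comp p r q w k (u p r q (w k) x)
  end.

Definition coding (p r : nat -> Z) (q : nat -> nat) (w : nat -> nat) (x : R) : Prop :=
  Un_cv (fun n => comp p r q w n 0) x.

Definition is_rational (y : R) : Prop :=
  exists a b : Z, b <> 0%Z /\ y = IZR a / IZR b.

Fixpoint prodZ (f : nat -> Z) (n : nat) : Z :=
  match n with O => 1%Z | S k => (prodZ f k * f k)%Z end.

(* (w_i)_{i > n} (1-indexed) is periodic with period m *)
Definition periodic_from (w : nat -> nat) (n m : nat) : Prop :=
  (1 <= m)%nat /\ forall i, (n <= i)%nat -> w (i + m)%nat = w i.

Definition min_preperiod (w : nat -> nat) (n : nat) : Prop :=
  (exists m, periodic_from w n m) /\
  forall n', (exists m, periodic_from w n' m) -> (n <= n')%nat.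

Definition min_period (w : nat -> nat) (n m : nat) : Prop :=
  periodic_from w n m /\ forall m', periodic_from w n m' -> (m <= m')%nat.

(* intrinsic denominator q_int = q_(1) (q_(2) - p_(2)) *)
Definition q_int (p : nat -> Z) (q : nat -> nat) (w : nat -> nat) (n m : nat) : Z :=
  (prodZ (fun i => Z.of_nat (q (w i))) n *
   (prodZ (fun i => Z.of_nat (q (w (n + i)%nat))) m
    - prodZ (fun i => p (w (n + i)%nat)) m))%Z.

Definition badly_symb_approx (N : nat) (p r : nat -> Z) (q : nat -> nat)
    (psi : R -> R) (x : R) : Prop :=
  exists eps : R, eps > 0 /\
    forall (y : R) (w' : nat -> nat) (n m : nat),
      is_rational y -> valid_word N w' -> coding p r q w' y ->
      min_preperiod w' n -> min_period w' n m ->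
      Rabs (x - y) >= eps * psi (IZR (q_int p q w' n m)) / IZR (q_int p q w' n m).

Fixpoint sumR (f : nat -> R) (n : nat) : R :=
  match n with O => 0 | S k => sumR f k + f k end.

Definition pseudolength (q : nat -> nat) (w : nat -> nat) (i len : nat) : R :=
  sumR (fun k => ln (INR (q (w (i + k)%nat)))) len.

Definition admissible_psi (psi : R -> R) : Prop :=
  (forall t, 0 < t -> 0 < psi t) /\
  (forall s t, 0 < s -> s <= t -> psi t <= psi s) /\
  (exists B, forall t, 0 < t -> psi t <= B) /\
  (forall K, 0 < K -> exists cK CK, 0 < cK /\ cK <= CK /\
     forall t, 0 < t -> cK * psi t <= psi (K * t) /\ psi (K * t) <= CK * psi t).

Definition Psi (psi : R -> R) (t : R) : R := - ln (psi (exp t)).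

(** Let [w] code [x] and write [Q_n] for the product of the denominators of the
  first [n] letters.  The composition [u_(w 0) o ... o u_(w (n-1))] is affine
  with slope [+-1/Q_n]; so cylinders of depth [n] have length [|I|/Q_n], and
  the pseudolength of [w_i .. w_(i+len-1)] is [ln Q_(i+len) - ln Q_i].  The
  repetition inequality of the lemma therefore reads
  [Q_(i+len) psi(Q_(l-len)) <= e^K Q_i].

  - If a word occurs at positions [i < j] of [w], the eventually periodic word
    [w_0 .. w_(i-1) (w_i .. w_(j-1))^oo] codes a rational point [y] sharing the
    first [j + len] letters with [w], with intrinsic denominator at most
    [2 Q_j].  Bad approximability then bounds [Q_(j+len) / Q_j].
  - Conversely, if the coding of a rational [y] (preperiod [n], period [m])
    first differs from [w] at [k], strong separation gives
    [|x - y| >= delta / Q_k]; for [k > n + m] the common prefix contains a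
    repeated word, so the repetition bound controls [Q_k].
*)

From Stdlib Require Import Reals Lra Lia ZArith Arith Classical.
Open Scope R_scope.

Lemma prodZ_ext (f g : nat -> Z) (n : nat) :
  (forall i, (i < n)%nat -> f i = g i) -> prodZ f n = prodZ g n.
Proof.
  induction n as [|n IH]; intros Hfg; simpl; [reflexivity|].
  rewrite IH by (intros; apply Hfg; lia). rewrite Hfg by lia. reflexivity.
Qed.

Lemma prodZ_split (f : nat -> Z) (n m : nat) :
  prodZ f (n + m) = (prodZ f n * prodZ (fun i => f (n + i)%nat) m)%Z.
Proof.
  induction m as [|m IH]; simpl.
  - rewrite Nat.add_0_r. ring.
  - rewrite Nat.add_succ_r. simpl. rewrite IH. ring.
Qed.

Definition shift (k : nat) (v : nat -> nat) (s : nat) : nat := v (k + s)%nat.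

Section Compositions.
Variables (p r : nat -> Z) (q : nat -> nat).

Definition contracting_word (v : nat -> nat) : Prop :=
  forall i, (p (v i) = 1%Z \/ p (v i) = (-1)%Z) /\ (2 <= q (v i))%nat.

(** [comp v n] is the affine map [x |-> (sign v n * x + offset v n) / denom v n];
    [denom v n] is the product [Q_n] of the denominators of the first [n] letters. *)
Definition denom (v : nat -> nat) (n : nat) : Z :=
  prodZ (fun i => Z.of_nat (q (v i))) n.
Definition sign (v : nat -> nat) (n : nat) : Z := prodZ (fun i => p (v i)) n.
Fixpoint offset (v : nat -> nat) (n : nat) : Z :=
  match n with
  | O => 0%Z
  | S k => (sign v k * r (v k) + offset v k * Z.of_nat (q (v k)))%Z
  end.

Lemma contracting_shift (v : nat -> nat) (k : nat) :
  contracting_word v -> contracting_word (shift k v).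
Proof. intros Hv i. apply Hv. Qed.

Lemma denom_ext (v v' : nat -> nat) (n : nat) :
  (forall i, (i < n)%nat -> v i = v' i) -> denom v n = denom v' n.
Proof. intros H. apply prodZ_ext. intros i Hi. rewrite H; auto. Qed.

Lemma denom_split (v : nat -> nat) (n m : nat) :
  denom v (n + m) = (denom v n * denom (shift n v) m)%Z.
Proof. apply prodZ_split. Qed.

Lemma denom_ge (v : nat -> nat) (n : nat) :
  contracting_word v -> (Z.of_nat n + 1 <= denom v n)%Z.
Proof.
  intros Hv. induction n as [|n IH]; unfold denom in *; simpl; [lia|].
  destruct (Hv n) as [_ Hq]. nia.
Qed.

Lemma denom_mono (v : nat -> nat) (n n' : nat) :
  contracting_word v -> (n <= n')%nat -> (denom v n <= denom v n')%Z.
Proof.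
  intros Hv Hn. replace n' with (n + (n' - n))%nat by lia. rewrite denom_split.
  pose proof (denom_ge v n Hv).
  pose proof (denom_ge (shift n v) (n' - n) (contracting_shift v n Hv)). nia.
Qed.

Lemma denom_ge_R (v : nat -> nat) (n : nat) :
  contracting_word v -> INR n + 1 <= IZR (denom v n).
Proof.
  intros Hv. pose proof (denom_ge v n Hv). rewrite INR_IZR_INZ, <- plus_IZR.
  apply IZR_le. lia.
Qed.

Lemma denom_pos_R (v : nat -> nat) (n : nat) :
  contracting_word v -> 1 <= IZR (denom v n).
Proof. intros Hv. pose proof (denom_ge_R v n Hv). pose proof (pos_INR n). lra. Qed.

Lemma sign_pm (v : nat -> nat) (n : nat) :
  contracting_word v -> sign v n = 1%Z \/ sign v n = (-1)%Z.
Proof.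
  intros Hv. induction n as [|n IH]; unfold sign in *; simpl; [auto|].
  destruct (Hv n) as [[Hp|Hp] _]; rewrite Hp; destruct IH as [E|E]; rewrite E; auto.
Qed.

Lemma sign_sq_R (v : nat -> nat) (n : nat) :
  contracting_word v -> IZR (sign v n) * IZR (sign v n) = 1.
Proof. intros Hv. destruct (sign_pm v n Hv) as [E|E]; rewrite E; simpl; lra. Qed.

Lemma sign_abs_R (v : nat -> nat) (n : nat) :
  contracting_word v -> Rabs (IZR (sign v n)) = 1.
Proof.
  intros Hv. destruct (sign_pm v n Hv) as [E|E]; rewrite E;
    [apply Rabs_R1 | rewrite Rabs_left; simpl; lra].
Qed.

Lemma comp_affine (v : nat -> nat) (n : nat) (x : R) : contracting_word v ->
  comp p r q v n x = (IZR (sign v n) * x + IZR (offset v n)) / IZR (denom v n).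
Proof.
  intros Hv. revert x. induction n as [|n IH]; intros x; simpl.
  - unfold sign, denom. simpl. field.
  - rewrite IH. unfold u, sign, denom in *. simpl.
    pose proof (denom_pos_R v n Hv) as HQ. unfold denom in HQ.
    destruct (Hv n) as [_ Hq].
    assert (Hq' : 0 < INR (q (v n))) by (apply lt_0_INR; lia).
    rewrite !mult_IZR, plus_IZR, !mult_IZR, <- !INR_IZR_INZ. field. lra.
Qed.

Lemma comp_ext (v v' : nat -> nat) (n : nat) (x : R) :
  (forall i, (i < n)%nat -> v i = v' i) -> comp p r q v n x = comp p r q v' n x.
Proof.
  revert x. induction n as [|n IH]; intros x H; simpl; [reflexivity|].
  rewrite H by lia. apply IH. intros; apply H; lia.
Qed.

Lemma comp_split (v : nat -> nat) (k t : nat) (x : R) :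
  comp p r q v (k + t) x = comp p r q v k (comp p r q (shift k v) t x).
Proof.
  revert x. induction t as [|t IH]; intros x.
  - rewrite Nat.add_0_r. reflexivity.
  - rewrite Nat.add_succ_r. simpl. rewrite IH. reflexivity.
Qed.

Lemma comp_dist (v : nat -> nat) (n : nat) (a b : R) : contracting_word v ->
  Rabs (comp p r q v n a - comp p r q v n b) = Rabs (a - b) / IZR (denom v n).
Proof.
  intros Hv. rewrite !comp_affine by auto.
  pose proof (denom_pos_R v n Hv) as HQ.
  replace (_ - _) with (IZR (sign v n) * (a - b) / IZR (denom v n)) by (field; lra).
  unfold Rdiv. rewrite !Rabs_mult, (Rabs_pos_eq (/ _)).
  2: { left. apply Rinv_0_lt_compat. lra. }
  rewrite sign_abs_R by auto. ring.
Qed.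

Lemma comp_shrinks (v : nat -> nat) (M e : R) : contracting_word v -> 0 < e ->
  exists n0, forall n, (n0 <= n)%nat -> forall a b, Rabs (a - b) <= M ->
    Rabs (comp p r q v n a - comp p r q v n b) < e.
Proof.
  intros Hv He. destruct (INR_unbounded (M / e)) as [n0 Hn0].
  exists n0. intros n Hn a b Hab. rewrite comp_dist by auto.
  pose proof (denom_pos_R v n Hv). pose proof (denom_ge_R v n Hv).
  pose proof (le_INR _ _ Hn).
  pose proof (Rabs_pos (a - b)).
  assert (HM : M < e * IZR (denom v n)).
  { assert (M / e * e = M) by (field; lra). nra. }
  apply (Rmult_lt_reg_r (IZR (denom v n))); [lra|].
  unfold Rdiv. rewrite Rmult_assoc, Rinv_l by lra. lra.
Qed.

Lemma pseudolength_denom (v : nat -> nat) (i len : nat) : contracting_word v ->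
  pseudolength q v i len = ln (IZR (denom v (i + len))) - ln (IZR (denom v i)).
Proof.
  intros Hv. unfold pseudolength. induction len as [|len IH]; simpl.
  - rewrite Nat.add_0_r. ring.
  - rewrite IH, Nat.add_succ_r.
    change (denom v (S (i + len))) with (denom v (i + len) * Z.of_nat (q (v (i + len)%nat)))%Z.
    rewrite mult_IZR, <- INR_IZR_INZ.
    pose proof (denom_pos_R v (i + len) Hv). destruct (Hv (i + len)%nat) as [_ Hq].
    assert (0 < INR (q (v (i + len)%nat))) by (apply lt_0_INR; lia).
    rewrite ln_mult by lra. ring.
Qed.

Lemma pseudolength_ext (v : nat -> nat) (i j len : nat) :
  (forall k, (k < len)%nat -> v (i + k)%nat = v (j + k)%nat) ->
  pseudolength q v i len = pseudolength q v j len.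
Proof.
  intros H. unfold pseudolength. induction len as [|len IH]; simpl; [reflexivity|].
  rewrite IH by (intros; apply H; lia). rewrite H by lia. reflexivity.
Qed.

End Compositions.

Lemma ln_le_iff (a b : R) : 0 < a -> 0 < b -> (ln a <= ln b <-> a <= b).
Proof.
  intros Ha Hb. split; intros H.
  - apply Rnot_lt_le. intros Hlt. apply (ln_increasing b a) in Hlt; auto. lra.
  - destruct H as [H|H]; [left; apply ln_increasing; auto | subst; lra].
Qed.

Lemma segment_iff (A B y : R) :
  (y - A) * (y - B) <= 0 <-> Rmin A B <= y <= Rmax A B.
Proof. unfold Rmin, Rmax. destruct (Rle_dec A B); split; intros; nra. Qed.

Lemma segment_closed (m M y : R) :
  (forall e, 0 < e -> exists s, m <= s <= M /\ Rabs (s - y) < e) -> m <= y <= M.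
Proof.
  intros H. split; apply Rnot_lt_le; intros Hlt;
    [destruct (H (m - y)) as [s [Hs Hd]] | destruct (H (y - M)) as [s [Hs Hd]]];
    try lra; apply Rabs_def2 in Hd; lra.
Qed.

Lemma segments_gap (m1 M1 m2 M2 : R) :
  m1 <= M1 -> m2 <= M2 -> (forall y, ~ (m1 <= y <= M1 /\ m2 <= y <= M2)) ->
  exists d, 0 < d /\ forall y1 y2, m1 <= y1 <= M1 -> m2 <= y2 <= M2 -> d <= Rabs (y1 - y2).
Proof.
  intros H1 H2 Hdisj. destruct (Rlt_dec M1 m2) as [L|L].
  - exists (m2 - M1). split; [lra|]. intros. rewrite Rabs_left1 by lra. lra.
  - destruct (Rlt_dec M2 m1) as [L'|L'].
    + exists (m1 - M2). split; [lra|]. intros. rewrite Rabs_right by lra. lra.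
    + exfalso. apply (Hdisj (Rmax m1 m2)). unfold Rmax. destruct Rle_dec; lra.
Qed.

Lemma finite_positive_min (n : nat) (P : nat -> R -> Prop) :
  (forall a d d', 0 < d' <= d -> P a d -> P a d') ->
  (forall a, (a < n)%nat -> exists d, 0 < d /\ P a d) ->
  exists d, 0 < d /\ forall a, (a < n)%nat -> P a d.
Proof.
  intros Hdown. induction n as [|n IH]; intros H.
  - exists 1. split; [lra|]. intros; lia.
  - destruct IH as [d1 [Hd1 H1]]; [intros; apply H; lia|].
    destruct (H n) as [d2 [Hd2 H2]]; [lia|].
    assert (Hmin : 0 < Rmin d1 d2) by (apply Rmin_glb_lt; auto).
    exists (Rmin d1 d2). split; [exact Hmin|]. intros a Ha.
    destruct (Nat.eq_dec a n) as [->|Hne].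
    + apply (Hdown n d2); [split; [exact Hmin | apply Rmin_r] | exact H2].
    + apply (Hdown a d1); [split; [exact Hmin | apply Rmin_l] | apply H1; lia].
Qed.

Lemma affine_image (a b c lo hi y : R) : a * a = 1 -> 0 < c -> lo <= hi ->
  (exists z, lo <= z <= hi /\ y = (a * z + b) / c) <->
  Rmin ((a * lo + b) / c) ((a * hi + b) / c) <= y
    <= Rmax ((a * lo + b) / c) ((a * hi + b) / c).
Proof.
  intros Ha Hc Hlh. rewrite <- segment_iff.
  assert (Hprod : forall z, ((a * z + b) / c - (a * lo + b) / c) *
      ((a * z + b) / c - (a * hi + b) / c) = (z - lo) * (z - hi) / (c * c)).
  { intros z. replace (_ * _) with (a * a * ((z - lo) * (z - hi)) / (c * c))
      by (field; lra). rewrite Ha. field. lra. }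
  assert (Hcc : 0 < / (c * c)) by (apply Rinv_0_lt_compat; nra).
  split.
  - intros [z [Hz ->]]. rewrite Hprod. unfold Rdiv.
    assert ((z - lo) * (z - hi) <= 0) by nra. nra.
  - intros H. exists (a * (c * y - b)).
    assert (Hy : y = (a * (a * (c * y - b)) + b) / c).
    { replace (a * (a * (c * y - b)) + b) with (a * a * (c * y - b) + b) by ring.
      rewrite Ha. field. lra. }
    rewrite Hy, Hprod in H. unfold Rdiv in H. split; [|exact Hy].
    assert ((a * (c * y - b) - lo) * (a * (c * y - b) - hi) <= 0) by nra. nra.
Qed.

Lemma contraction_fixed_point_in (f : R -> R) (Q lo hi z : R) : 1 < Q -> lo <= hi ->
  (forall a b, Rabs (f a - f b) = Rabs (a - b) / Q) ->
  (forall x, lo <= x <= hi -> lo <= f x <= hi) -> f z = z -> lo <= z <= hi.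
Proof.
  intros HQ Hlh Hdist Hinv Hz.
  assert (Hshrink : forall t, 0 < t -> t / Q < t).
  { intros t Ht. apply (Rmult_lt_reg_r Q); [lra|].
    unfold Rdiv. rewrite Rmult_assoc, Rinv_l by lra. nra. }
  split; apply Rnot_lt_le; intros Hlt.
  - pose proof (Hinv lo (conj (Rle_refl lo) Hlh)) as Hlo.
    pose proof (Hdist lo z) as D. rewrite Hz in D.
    rewrite (Rabs_right (lo - z)), Rabs_right in D by lra.
    pose proof (Hshrink (lo - z)). lra.
  - pose proof (Hinv hi (conj Hlh (Rle_refl hi))) as Hhi.
    pose proof (Hdist hi z) as D. rewrite Hz in D.
    rewrite (Rabs_left (hi - z)), Rabs_left in D by lra.
    pose proof (Hshrink (z - hi)). lra.
Qed.

Lemma least_element (P : nat -> Prop) :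
  (exists n, P n) -> exists n, P n /\ forall n', P n' -> (n <= n')%nat.
Proof.
  intros Hex. destruct (dec_inh_nat_subset_has_unique_least_element P
    (fun n => classic (P n)) Hex) as [n [[Hn Hmin] _]].
  exists n. split; assumption.
Qed.

Lemma periodic_iter (v : nat -> nat) (n m : nat) : periodic_from v n m ->
  forall t s, (n <= s)%nat -> v (s + t * m)%nat = v s.
Proof.
  intros [Hm Hper] t. induction t as [|t IH]; intros s Hs.
  - rewrite Nat.add_0_r. reflexivity.
  - replace (s + S t * m)%nat with (s + t * m + m)%nat by lia.
    rewrite Hper by lia. apply IH, Hs.
Qed.

Lemma periodic_transfer (v : nat -> nat) (n m i d : nat) :
  periodic_from v n m -> periodic_from v i d -> (n <= i)%nat -> periodic_from v n d.
Proof.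
  intros Hnm Hid Hni. split; [apply Hid|]. intros s Hs.
  rewrite <- (periodic_iter v n m Hnm i (s + d)%nat), <- (periodic_iter v n m Hnm i s)
    by lia.
  replace (s + d + i * m)%nat with (s + i * m + d)%nat by lia.
  pose proof (proj1 Hnm). apply Hid. nia.
Qed.

Lemma minimal_preperiod_period (v : nat -> nat) (i d : nat) : periodic_from v i d ->
  exists n m, min_preperiod v n /\ min_period v n m /\ (n + m <= i + d)%nat.
Proof.
  intros Hid.
  destruct (least_element (fun n => exists m, periodic_from v n m)) as [n [Hn Hnmin]].
  { exists i, d. exact Hid. }
  assert (Hni : (n <= i)%nat) by (apply Hnmin; exists d; exact Hid).
  destruct Hn as [m1 Hm1].
  destruct (least_element (fun m => periodic_from v n m)) as [m [Hm Hmmin]].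
  { exists m1. exact Hm1. }
  assert (Hmd : (m <= d)%nat) by (apply Hmmin, (periodic_transfer v n m1 i d); auto).
  exists n, m. repeat split; auto.
  - exists m1. exact Hm1.
  - apply Hm.
  - apply Hm.
  - lia.
Qed.

Definition periodize (w : nat -> nat) (i d : nat) (s : nat) : nat :=
  if (s <? i)%nat then w s else w (i + (s - i) mod d)%nat.

Lemma periodize_valid (N : nat) (w : nat -> nat) (i d : nat) :
  valid_word N w -> valid_word N (periodize w i d).
Proof. intros Hw s. unfold periodize. destruct (s <? i)%nat; apply Hw. Qed.

Lemma periodize_periodic (w : nat -> nat) (i d : nat) :
  (1 <= d)%nat -> periodic_from (periodize w i d) i d.
Proof.
  intros Hd. split; [exact Hd|]. intros s Hs. unfold periodize.
  rewrite (proj2 (Nat.ltb_ge (s + d) i)), (proj2 (Nat.ltb_ge s i)) by lia.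
  replace (s + d - i)%nat with (s - i + 1 * d)%nat by lia.
  rewrite Nat.Div0.mod_add. reflexivity.
Qed.

Lemma periodize_agrees (w : nat -> nat) (i d len : nat) : (1 <= d)%nat ->
  (forall k, (k < len)%nat -> w (i + k)%nat = w (i + d + k)%nat) ->
  forall s, (s < i + d + len)%nat -> periodize w i d s = w s.
Proof.
  intros Hd Hrep s. induction s as [s IH] using (well_founded_induction lt_wf).
  intros Hs. destruct (lt_dec s (i + d)) as [Hsmall|Hlarge].
  - unfold periodize. destruct (s <? i)%nat eqn:E; [reflexivity|].
    apply Nat.ltb_ge in E. rewrite Nat.mod_small by lia. f_equal. lia.
  - destruct (periodize_periodic w i d Hd) as [_ Hper].
    replace s with (s - d + d)%nat by lia. rewrite Hper, IH by lia.
    transitivity (w (i + d + (s - i - d))%nat).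
    + rewrite <- Hrep by lia. f_equal. lia.
    + f_equal. lia.
Qed.

Lemma q_int_comparable (p : nat -> Z) (q : nat -> nat) (v : nat -> nat) (n m : nat) :
  contracting_word p q v -> (1 <= m)%nat ->
  IZR (denom q v (n + m)) <= 2 * IZR (q_int p q v n m) /\
  IZR (q_int p q v n m) <= 2 * IZR (denom q v (n + m)) /\
  1 <= IZR (q_int p q v n m).
Proof.
  intros Hv Hm.
  assert (HZ : (denom q v (n + m) <= 2 * q_int p q v n m)%Z /\
               (q_int p q v n m <= 2 * denom q v (n + m))%Z /\
               (1 <= q_int p q v n m)%Z).
  { unfold q_int. rewrite denom_split.
    change (prodZ (fun i => Z.of_nat (q (v i))) n) with (denom q v n).
    change (prodZ (fun i => Z.of_nat (q (v (n + i)%nat))) m) with (denom q (shift n v) m).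
    change (prodZ (fun i => p (v (n + i)%nat)) m) with (sign p (shift n v) m).
    pose proof (denom_ge p q v n Hv).
    pose proof (denom_ge p q (shift n v) m (contracting_shift p q v n Hv)).
    destruct (sign_pm p q (shift n v) m (contracting_shift p q v n Hv)) as [E|E];
      rewrite E; nia. }
  destruct HZ as [A [B C]]. apply IZR_le in A, B, C. rewrite mult_IZR in A, B. lra.
Qed.

Section SeparatedIFS.
Variables (N : nat) (p r : nat -> Z) (q : nat -> nat) (lo hi : R).
Hypothesis letters : forall a, (a < N)%nat -> (p a = 1%Z \/ p a = (-1)%Z) /\ (2 <= q a)%nat.
Hypothesis lo_le_hi : lo <= hi.
Hypothesis maps_into : forall a, (a < N)%nat ->
  forall x, lo <= x <= hi -> lo <= u p r q a x <= hi.
Hypothesis separated : forall a b, (a < N)%nat -> (b < N)%nat -> a <> b ->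
  forall x y, lo <= x <= hi -> lo <= y <= hi -> u p r q a x <> u p r q b y.

Lemma valid_contracting (v : nat -> nat) : valid_word N v -> contracting_word p q v.
Proof. intros Hv i. apply letters, Hv. Qed.

Lemma comp_maps_into (v : nat -> nat) (n : nat) (x : R) :
  valid_word N v -> lo <= x <= hi -> lo <= comp p r q v n x <= hi.
Proof. intros Hv. revert x. induction n as [|n IH]; intros x Hx; simpl; auto. Qed.

Definition in_cylinder (v : nat -> nat) (n : nat) (y : R) : Prop :=
  exists z, lo <= z <= hi /\ y = comp p r q v n z.

Lemma cylinder_segment (v : nat -> nat) (n : nat) (y : R) : valid_word N v ->
  in_cylinder v n y <->
  Rmin (comp p r q v n lo) (comp p r q v n hi) <= y
    <= Rmax (comp p r q v n lo) (comp p r q v n hi).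
Proof.
  intros Hv. pose proof (valid_contracting v Hv) as Hc.
  assert (E : forall z, comp p r q v n z =
    (IZR (sign p v n) * z + IZR (offset p r q v n)) / IZR (denom q v n))
    by (intros; apply comp_affine; auto).
  unfold in_cylinder. setoid_rewrite E. apply affine_image; auto.
  - apply (sign_sq_R p q); auto.
  - pose proof (denom_pos_R p q v n Hc). lra.
Qed.

Lemma coding_in_cylinder (v : nat -> nat) (y : R) (k : nat) :
  valid_word N v -> coding p r q v y -> in_cylinder v k y.
Proof.
  intros Hv Hy. pose proof (valid_contracting v Hv) as Hc.
  apply cylinder_segment; auto. apply segment_closed. intros e He.
  destruct (Hy (e / 2)) as [n1 Hn1]; [lra|].
  destruct (comp_shrinks p r q v (Rabs (lo - 0)) (e / 2) Hc) as [n2 Hn2]; [lra|].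
  set (n := Nat.max (Nat.max n1 n2) k).
  exists (comp p r q v n lo). split.
  - apply cylinder_segment; auto. exists (comp p r q (shift k v) (n - k) lo). split.
    + apply comp_maps_into; [intros s; apply Hv | lra].
    + rewrite <- comp_split. f_equal. unfold n. lia.
  - specialize (Hn1 n ltac:(unfold n; lia)). unfold R_dist in Hn1.
    specialize (Hn2 n ltac:(unfold n; lia) lo 0 (Rle_refl _)).
    replace (comp p r q v n lo - y)
      with ((comp p r q v n lo - comp p r q v n 0) + (comp p r q v n 0 - y)) by ring.
    pose proof (Rabs_triang (comp p r q v n lo - comp p r q v n 0)
      (comp p r q v n 0 - y)). lra.
Qed.

Lemma cylinders_coding (v : nat -> nat) (y : R) :
  valid_word N v -> (forall n, in_cylinder v n y) -> coding p r q v y.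
Proof.
  intros Hv Hcyl e He.
  destruct (comp_shrinks p r q v (Rabs lo + Rabs hi) e (valid_contracting v Hv) He)
    as [n0 Hn0].
  exists n0. intros n Hn. destruct (Hcyl n) as [z [Hz ->]]. unfold R_dist.
  apply Hn0; auto. unfold Rabs. repeat destruct Rcase_abs; lra.
Qed.

Lemma common_prefix_close (v v' : nat -> nat) (k : nat) (x y : R) :
  valid_word N v -> valid_word N v' -> (forall s, (s < k)%nat -> v s = v' s) ->
  coding p r q v x -> coding p r q v' y ->
  Rabs (x - y) <= (hi - lo) / IZR (denom q v k).
Proof.
  intros Hv Hv' Hag Hx Hy.
  destruct (coding_in_cylinder v x k Hv Hx) as [z1 [Hz1 ->]].
  destruct (coding_in_cylinder v' y k Hv' Hy) as [z2 [Hz2 ->]].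
  rewrite <- (comp_ext p r q v v') by auto.
  rewrite comp_dist by (apply valid_contracting; auto).
  pose proof (denom_pos_R p q v k (valid_contracting v Hv)).
  unfold Rdiv. apply Rmult_le_compat_r; [left; apply Rinv_0_lt_compat; lra|].
  unfold Rabs. destruct Rcase_abs; lra.
Qed.

Lemma separation_constant : exists delta, 0 < delta /\
  forall a b, (a < N)%nat -> (b < N)%nat -> a <> b ->
  forall z1 z2, lo <= z1 <= hi -> lo <= z2 <= hi -> delta <= Rabs (u p r q a z1 - u p r q b z2).
Proof.
  assert (Himage : forall a, (a < N)%nat -> forall y,
    (exists z, lo <= z <= hi /\ y = u p r q a z) <->
    Rmin (u p r q a lo) (u p r q a hi) <= y <= Rmax (u p r q a lo) (u p r q a hi)).
  { intros a Ha y. destruct (letters a Ha) as [Hp Hq]. unfold u.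
    apply affine_image; auto.
    - destruct Hp as [-> | ->]; simpl; lra.
    - apply lt_0_INR. lia. }
  assert (Hpair : forall a b, (a < N)%nat -> (b < N)%nat -> a <> b ->
    exists d, 0 < d /\ forall z1 z2, lo <= z1 <= hi -> lo <= z2 <= hi ->
      d <= Rabs (u p r q a z1 - u p r q b z2)).
  { intros a b Ha Hb Hab.
    destruct (segments_gap (Rmin (u p r q a lo) (u p r q a hi)) (Rmax (u p r q a lo) (u p r q a hi))
      (Rmin (u p r q b lo) (u p r q b hi)) (Rmax (u p r q b lo) (u p r q b hi)))
      as [d [Hd Hgap]]; try apply Rminmax.
    - intros y [Hya Hyb].
      apply (Himage a Ha) in Hya as [z1 [Hz1 E1]]. apply (Himage b Hb) in Hyb as [z2 [Hz2 E2]].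
      apply (separated a b Ha Hb Hab z1 z2 Hz1 Hz2). congruence.
    - exists d. split; [exact Hd|]. intros z1 z2 Hz1 Hz2.
      apply Hgap; [apply (Himage a Ha) | apply (Himage b Hb)]; eauto. }
  destruct (finite_positive_min N (fun a d => forall b, (b < N)%nat -> a <> b ->
    forall z1 z2, lo <= z1 <= hi -> lo <= z2 <= hi -> d <= Rabs (u p r q a z1 - u p r q b z2)))
    as [delta [Hdelta Hall]].
  - intros a d d' Hd H b Hb Hab z1 z2 H1 H2. specialize (H b Hb Hab z1 z2 H1 H2). lra.
  - intros a Ha.
    destruct (finite_positive_min N (fun b d => a <> b ->
      forall z1 z2, lo <= z1 <= hi -> lo <= z2 <= hi -> d <= Rabs (u p r q a z1 - u p r q b z2)))
      as [d [Hd Hb]].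
    + intros b d d' Hd H Hab z1 z2 H1 H2. specialize (H Hab z1 z2 H1 H2). lra.
    + intros b Hb. destruct (Nat.eq_dec a b) as [->|Hab].
      * exists 1. split; [lra | contradiction].
      * destruct (Hpair a b Ha Hb Hab) as [d [Hd H]]. exists d. auto.
    + exists d. split; [exact Hd|]. intros b Hb'. apply Hb, Hb'.
  - exists delta. split; [exact Hdelta|]. intros a b Ha Hb. apply Hall; auto.
Qed.

Lemma first_difference_far : exists delta, 0 < delta /\
  forall (v v' : nat -> nat) (k : nat) (x y : R),
    valid_word N v -> valid_word N v' -> (forall s, (s < k)%nat -> v s = v' s) ->
    v k <> v' k -> coding p r q v x -> coding p r q v' y ->
    delta / IZR (denom q v k) <= Rabs (x - y).
Proof.
  destruct separation_constant as [delta [Hdelta Hsep]].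
  exists delta. split; [exact Hdelta|]. intros v v' k x y Hv Hv' Hag Hk Hx Hy.
  destruct (coding_in_cylinder v x (S k) Hv Hx) as [z1 [Hz1 ->]].
  destruct (coding_in_cylinder v' y (S k) Hv' Hy) as [z2 [Hz2 ->]].
  simpl. rewrite <- (comp_ext p r q v v' k) by auto.
  rewrite comp_dist by (apply valid_contracting; auto).
  pose proof (denom_pos_R p q v k (valid_contracting v Hv)).
  unfold Rdiv. apply Rmult_le_compat_r; [left; apply Rinv_0_lt_compat; lra|].
  apply Hsep; auto.
Qed.
Lemma periodize_orbit (w : nat -> nat) (i d : nat) (z : R) : (1 <= d)%nat ->
  comp p r q (shift i w) d z = z ->
  forall t, comp p r q (periodize w i d) (i + t * d) z = comp p r q w i z.
Proof.
  intros Hd Hz t.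
  assert (Hblock : forall s, (s < i + d)%nat -> periodize w i d s = w s).
  { intros s Hs. apply (periodize_agrees w i d 0 Hd); [intros; lia | lia]. }
  induction t as [|t IH].
  - rewrite Nat.add_0_r. apply comp_ext. intros s Hs. apply Hblock. lia.
  - replace (i + S t * d)%nat with (i + t * d + d)%nat by lia. rewrite comp_split.
    rewrite (comp_ext p r q (shift (i + t * d) (periodize w i d)) (shift i w)), Hz;
      [exact IH|].
    intros s Hs. unfold shift.
    replace (i + t * d + s)%nat with (i + s + t * d)%nat by lia.
    rewrite (periodic_iter _ i d (periodize_periodic w i d Hd)) by lia.
    apply Hblock. lia.
Qed.

(** Eventually periodic words code rational points: the fixed point [z] of the
    period block is [offset / (denom - sign)], and its image under the preperiod
    is again rational. *)
Lemma periodize_rational (w : nat -> nat) (i d : nat) : valid_word N w -> (1 <= d)%nat ->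
  exists y, is_rational y /\ coding p r q (periodize w i d) y.
Proof.
  intros Hw Hd. pose proof (valid_contracting w Hw) as Hc.
  set (ws := shift i w).
  assert (Hws : valid_word N ws) by (intros s; apply Hw).
  pose proof (valid_contracting ws Hws) as Hcs.
  set (P := sign p ws d). set (R0 := offset p r q ws d). set (Q := denom q ws d).
  assert (HQ : (2 <= Q)%Z) by (pose proof (denom_ge p q ws d Hcs); unfold Q; lia).
  assert (HP : P = 1%Z \/ P = (-1)%Z) by apply (sign_pm p q ws d Hcs).
  assert (HQR : 2 <= IZR Q) by (apply IZR_le; lia).
  assert (HQP : 1 <= IZR Q - IZR P) by (rewrite <- minus_IZR; apply IZR_le; lia).
  set (z := IZR R0 / (IZR Q - IZR P)).
  assert (Hfix : comp p r q ws d z = z).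
  { rewrite comp_affine by exact Hcs. fold P R0 Q. unfold z. field. lra. }
  assert (Hz : lo <= z <= hi).
  { apply (contraction_fixed_point_in (comp p r q ws d) (IZR Q)); auto.
    - apply IZR_lt. lia.
    - intros a b. apply comp_dist, Hcs.
    - intros y Hy. apply comp_maps_into; auto. }
  exists (comp p r q w i z). split.
  - exists (sign p w i * R0 + offset p r q w i * (Q - P))%Z, (denom q w i * (Q - P))%Z.
    pose proof (denom_ge p q w i Hc). split; [nia|].
    pose proof (denom_pos_R p q w i Hc).
    rewrite comp_affine by exact Hc. unfold z.
    rewrite plus_IZR, !mult_IZR, minus_IZR. field. lra.
  - apply cylinders_coding; [apply periodize_valid, Hw|]. intros n.
    rewrite <- (periodize_orbit w i d z Hd Hfix n).
    replace (i + n * d)%nat with (n + (i + n * d - n))%nat by nia. rewrite comp_split.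
    eexists. split; [|reflexivity].
    apply comp_maps_into; [intros s; apply periodize_valid, Hw | exact Hz].
Qed.

Lemma repetition_rational (w : nat -> nat) (i j len : nat) : valid_word N w -> (i < j)%nat ->
  (forall k, (k < len)%nat -> w (i + k)%nat = w (j + k)%nat) ->
  exists y w' n m, is_rational y /\ valid_word N w' /\ coding p r q w' y /\
    min_preperiod w' n /\ min_period w' n m /\
    (forall s, (s < j + len)%nat -> w s = w' s) /\
    IZR (q_int p q w' n m) <= 2 * IZR (denom q w j).
Proof.
  intros Hw Hij Hrep. set (d := (j - i)%nat). assert (Hd : (1 <= d)%nat) by lia.
  set (w' := periodize w i d).
  pose proof (periodize_valid N w i d Hw) as Hw'.
  assert (Hag : forall s, (s < j + len)%nat -> w s = w' s).
  { intros s Hs. symmetry. apply (periodize_agrees w i d len Hd); [|lia].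
    intros k Hk. replace (i + d + k)%nat with (j + k)%nat by lia. apply Hrep, Hk. }
  destruct (periodize_rational w i d Hw Hd) as [y [Hy Hcode]].
  destruct (minimal_preperiod_period w' i d (periodize_periodic w i d Hd))
    as [n [m [Hn [Hm Hnm]]]].
  assert (Hbound : IZR (q_int p q w' n m) <= 2 * IZR (denom q w j)).
  { destruct (q_int_comparable p q w' n m (valid_contracting w' Hw') (proj1 (proj1 Hm)))
      as [_ [Hqi _]].
    assert (IZR (denom q w' (n + m)) <= IZR (denom q w j)); [|lra].
    apply IZR_le. rewrite (denom_ext q w w' j) by (intros; apply Hag; lia).
    apply (denom_mono p); [apply valid_contracting, Hw' | lia]. }
  exists y, w', n, m.
  exact (conj Hy (conj Hw' (conj Hcode (conj Hn (conj Hm (conj Hag Hbound)))))).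
Qed.

Variable psi : R -> R.
Hypothesis psi_pos : forall t, 0 < t -> 0 < psi t.
Hypothesis psi_noninc : forall s t, 0 < s -> s <= t -> psi t <= psi s.
Hypothesis psi_bounded : exists B, forall t, 0 < t -> psi t <= B.
Hypothesis psi_slow : forall K, 0 < K -> exists cK CK, 0 < cK /\ cK <= CK /\
  forall t, 0 < t -> cK * psi t <= psi (K * t) /\ psi (K * t) <= CK * psi t.

Definition repetition_bound (w : nat -> nat) (K : R) : Prop :=
  forall (l len i j : nat),
    (1 <= len)%nat -> i <> j -> (i + len <= l)%nat -> (j + len <= l)%nat ->
    (forall k, (k < len)%nat -> w (i + k)%nat = w (j + k)%nat) ->
    pseudolength q w i len <= K + Psi psi (pseudolength q w 0 (l - len)).

Lemma repetition_bound_iff (v : nat -> nat) (i len n : nat) (K : R) :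
  contracting_word p q v ->
  pseudolength q v i len <= K + Psi psi (pseudolength q v 0 n) <->
  IZR (denom q v (i + len)) * psi (IZR (denom q v n)) <= exp K * IZR (denom q v i).
Proof.
  intros Hv. rewrite !(pseudolength_denom p q) by exact Hv.
  change (denom q v 0) with 1%Z. rewrite ln_1, Nat.add_0_l, Rminus_0_r.
  pose proof (denom_pos_R p q v n Hv). pose proof (denom_pos_R p q v i Hv).
  pose proof (denom_pos_R p q v (i + len) Hv).
  assert (0 < psi (IZR (denom q v n))) by (apply psi_pos; lra).
  unfold Psi. rewrite exp_ln by lra.
  rewrite <- (ln_le_iff (_ * psi _) (exp K * _)) by (try apply Rmult_lt_0_compat; try apply exp_pos; lra).
  rewrite !ln_mult, ln_exp by (try apply exp_pos; lra). split; intros; lra.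
Qed.

(** Compare [x] with the rational point produced by
    the repetition: its intrinsic denominator is [<= 2 Q_j] while it is
    [|I|/Q_(j+len)]-close to [x]. *)
Lemma later_occurrence_bound (w : nat -> nat) (x eps c : R) (l len i j : nat) :
  valid_word N w -> coding p r q w x -> 0 < eps -> 0 < c ->
  (forall (y : R) (w' : nat -> nat) (n m : nat),
    is_rational y -> valid_word N w' -> coding p r q w' y ->
    min_preperiod w' n -> min_period w' n m ->
    Rabs (x - y) >= eps * psi (IZR (q_int p q w' n m)) / IZR (q_int p q w' n m)) ->
  (forall t, 0 < t -> c * psi t <= psi (2 * t)) ->
  (i < j)%nat -> (j + len <= l)%nat ->
  (forall k, (k < len)%nat -> w (i + k)%nat = w (j + k)%nat) ->
  IZR (denom q w (j + len)) * psi (IZR (denom q w (l - len)))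
    <= 2 * (hi - lo + 1) / (eps * c) * IZR (denom q w j).
Proof.
  intros Hw Hx Heps Hc0 Hbad Hslow Hij Hjl Hrep. pose proof (valid_contracting w Hw) as Hc.
  destruct (repetition_rational w i j len Hw Hij Hrep)
    as [y [w' [n [m [Hy [Hw' [Hy' [Hn [Hm [Hag Hqj]]]]]]]]]].
  specialize (Hbad y w' n m Hy Hw' Hy' Hn Hm).
  pose proof (common_prefix_close w w' (j + len) x y Hw Hw' Hag Hx Hy') as Hclose.
  destruct (q_int_comparable p q w' n m (valid_contracting w' Hw') (proj1 (proj1 Hm)))
    as [_ [_ Hqi1]].
  set (qi := IZR (q_int p q w' n m)) in *.
  set (A := IZR (denom q w (j + len))) in *. set (B := IZR (denom q w j)) in *.
  set (B' := IZR (denom q w (l - len))).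
  assert (HA : 1 <= A) by apply (denom_pos_R p q w _ Hc).
  assert (HB : 1 <= B) by apply (denom_pos_R p q w _ Hc).
  assert (HBB' : B <= B') by (apply IZR_le, (denom_mono p); [exact Hc | lia]).
  assert (HpsiB : 0 < psi B) by (apply psi_pos; lra).
  assert (HpsiB' : psi B' <= psi B) by (apply psi_noninc; lra).
  assert (Hpsiqi : c * psi B <= psi qi).
  { apply Rle_trans with (psi (2 * B)); [apply Hslow; lra | apply psi_noninc; lra]. }
  (* [eps psi(qi) / qi <= |x - y| <= (hi - lo) / A], cleared of denominators *)
  assert (Hcross : eps * psi qi * A <= (hi - lo) * qi).
  { assert (Hle : eps * psi qi / qi <= (hi - lo) / A) by lra.
    apply (Rmult_le_compat_r (qi * A)) in Hle; [|nra].
    replace (eps * psi qi / qi * (qi * A)) with (eps * psi qi * A) in Hle by (field; lra).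
    replace ((hi - lo) / A * (qi * A)) with ((hi - lo) * qi) in Hle by (field; lra).
    exact Hle. }
  assert (HecA : 0 < eps * c * A) by (repeat apply Rmult_lt_0_compat; lra).
  assert (eps * c * (A * psi B') <= eps * A * (c * psi B)) by nra.
  assert (eps * A * (c * psi B) <= eps * A * psi qi)
    by (apply Rmult_le_compat_l; [nra | exact Hpsiqi]).
  assert ((hi - lo) * qi <= (hi - lo + 1) * (2 * B)) by nra.
  apply (Rmult_le_reg_l (eps * c)); [nra|].
  replace (eps * c * (2 * (hi - lo + 1) / (eps * c) * B))
    with (2 * (hi - lo + 1) * B) by (field; lra).
  lra.
Qed.

(** Bad approximability bounds repetitions, with [K = ln D]; the bound for the
    later of the two occurrences applies to both, as they have equal
    pseudolength. *)
Lemma badly_approx_repetition_bound (w : nat -> nat) (x : R) :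
  valid_word N w -> coding p r q w x -> badly_symb_approx N p r q psi x ->
  exists K, repetition_bound w K.
Proof.
  intros Hw Hx [eps [Heps Hbad]]. pose proof (valid_contracting w Hw) as Hc.
  destruct (psi_slow 2) as [c [C [Hc0 [_ Hslow]]]]; [lra|].
  set (D := 2 * (hi - lo + 1) / (eps * c)).
  assert (HD : 0 < D) by (apply Rdiv_lt_0_compat; nra).
  exists (ln D).
  assert (Hlater : forall l len i j, (i < j)%nat -> (j + len <= l)%nat ->
    (forall k, (k < len)%nat -> w (i + k)%nat = w (j + k)%nat) ->
    pseudolength q w j len <= ln D + Psi psi (pseudolength q w 0 (l - len))).
  { intros l len i j Hij Hjl Hrep.
    apply (repetition_bound_iff w j len (l - len) (ln D) Hc). rewrite exp_ln by exact HD.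
    apply (later_occurrence_bound w x eps c l len i j); auto.
    intros t Ht. apply Hslow, Ht. }
  intros l len i j Hlen Hij Hil Hjl Hrep. destruct (lt_dec i j) as [Hlt|Hge].
  - rewrite (pseudolength_ext q w i j) by exact Hrep. apply (Hlater l len i j); auto.
  - apply (Hlater l len j i); [lia | exact Hil | intros; symmetry; auto].
Qed.

(** Under a repetition bound, a prefix shared by [w] and a periodic word with
    preperiod [n] and period [m], reaching beyond [n + m], contains a repeated
    word: hence [Q_k psi(Q_(n+m)) <= e^K Q_(n+m)]. *)
Lemma shared_periodic_prefix_bound (K : R) (w w' : nat -> nat) (n m k : nat) :
  valid_word N w -> repetition_bound w K -> periodic_from w' n m ->
  (forall s, (s < k)%nat -> w s = w' s) -> (n + m < k)%nat ->
  IZR (denom q w k) * psi (IZR (denom q w (n + m))) <= exp K * IZR (denom q w (n + m)).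
Proof.
  intros Hw Hrep [Hm Hper] Hag Hk. set (len := (k - (n + m))%nat).
  assert (Hblock : forall t, (t < len)%nat -> w (n + t)%nat = w (n + m + t)%nat).
  { intros t Ht. rewrite !Hag by lia.
    replace (n + m + t)%nat with (n + t + m)%nat by lia. rewrite Hper by lia. reflexivity. }
  specialize (Hrep k len n (n + m)%nat ltac:(lia) ltac:(lia) ltac:(lia) ltac:(lia) Hblock).
  rewrite (pseudolength_ext q w n (n + m)) in Hrep by exact Hblock.
  replace (k - len)%nat with (n + m)%nat in Hrep by lia.
  apply (repetition_bound_iff w (n + m) len (n + m) K) in Hrep;
    [|apply valid_contracting, Hw].
  replace (n + m + len)%nat with k in Hrep by lia. exact Hrep.
Qed.

(** A word with bounded repetitions is not eventually periodic: otherwise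
    [Q_k psi(Q_(n+m)) <= e^K Q_(n+m)] for all [k], while [Q_k >= k + 1]. *)
Lemma repetition_bound_not_periodic (w w' : nat -> nat) (n m : nat) (K : R) :
  valid_word N w -> repetition_bound w K -> periodic_from w' n m ->
  exists k, w k <> w' k.
Proof.
  intros Hw Hrep Hper. pose proof (valid_contracting w Hw) as Hc.
  apply NNPP. intros Hsame.
  assert (Hall : forall s, w s = w' s) by (intros s; apply NNPP; eauto).
  set (Q := IZR (denom q w (n + m))).
  assert (HQ : 1 <= Q) by apply (denom_pos_R p q w _ Hc).
  assert (HpsiQ : 0 < psi Q) by (apply psi_pos; lra).
  destruct (INR_unbounded (exp K * Q / psi Q)) as [k0 Hk0].
  set (k := (k0 + n + m + 1)%nat).
  pose proof (shared_periodic_prefix_bound K w w' n m k Hw Hrep Hper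
    (fun s _ => Hall s) ltac:(unfold k; lia)) as Hs. fold Q in Hs.
  pose proof (denom_ge_R p q w k Hc).
  assert (INR k0 <= INR k) by (apply le_INR; unfold k; lia).
  assert (exp K * Q / psi Q * psi Q = exp K * Q) by (field; lra).
  nra.
Qed.

(** If the codings first differ at [k],
    separation gives [|x - y| >= delta'/Q_k], and [Q_k psi(Q_(n+m))] is at most
    [B Q_(n+m)] for [k <= n + m] and at most [e^K Q_(n+m)] beyond. *)
Lemma periodic_points_far (w : nat -> nat) (x K : R) :
  valid_word N w -> coding p r q w x -> repetition_bound w K ->
  exists delta, 0 < delta /\ forall (w' : nat -> nat) (n m : nat) (y : R),
    valid_word N w' -> periodic_from w' n m -> coding p r q w' y ->
    delta * psi (IZR (denom q w' (n + m))) <= IZR (denom q w' (n + m)) * Rabs (x - y).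
Proof.
  intros Hw Hx Hrep. pose proof (valid_contracting w Hw) as Hc.
  destruct first_difference_far as [delta [Hdelta Hfar]].
  destruct psi_bounded as [B HB].
  set (M := Rmax B 0 + exp K).
  assert (HM : 0 < M) by (pose proof (Rmax_r B 0); pose proof (exp_pos K); unfold M; lra).
  exists (delta / M). split; [apply Rdiv_lt_0_compat; lra|].
  intros w' n m y Hw' Hper Hy.
  set (Q := IZR (denom q w' (n + m))).
  assert (HQ : 1 <= Q) by apply (denom_pos_R p q w' _ (valid_contracting w' Hw')).
  assert (HpsiQ : 0 < psi Q) by (apply psi_pos; lra).
  destruct (least_element _ (repetition_bound_not_periodic w w' n m K Hw Hrep Hper))
    as [k [Hk Hkmin]].
  assert (Hag : forall s, (s < k)%nat -> w s = w' s).
  { intros s Hs. apply NNPP. intros Hne. specialize (Hkmin s Hne). lia. }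
  pose proof (Hfar w w' k x y Hw Hw' Hag Hk Hx Hy) as Hxy.
  set (Qk := IZR (denom q w k)) in *.
  assert (HQk : 1 <= Qk) by apply (denom_pos_R p q w _ Hc).
  assert (Hgrowth : Qk * psi Q <= M * Q).
  { destruct (le_lt_dec k (n + m)) as [Hle|Hgt].
    - assert (Qk <= Q).
      { apply IZR_le. rewrite (denom_ext q w w' k) by exact Hag.
        apply (denom_mono p); [apply valid_contracting, Hw' | exact Hle]. }
      assert (psi Q <= Rmax B 0) by (apply Rle_trans with B; [apply HB; lra | apply Rmax_l]).
      pose proof (exp_pos K). unfold M. nra.
    - pose proof (shared_periodic_prefix_bound K w w' n m k Hw Hrep Hper Hag Hgt) as Hs.
      rewrite (denom_ext q w w' (n + m)) in Hs by (intros; apply Hag; lia).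
      fold Q Qk in Hs. pose proof (Rmax_r B 0). unfold M. nra. }
  assert (delta <= Qk * Rabs (x - y)).
  { apply (Rmult_le_compat_r Qk) in Hxy; [|lra].
    replace (delta / Qk * Qk) with delta in Hxy by (field; lra). lra. }
  apply (Rmult_le_reg_l (M * Qk)); [nra|].
  replace (M * Qk * (delta / M * psi Q)) with (delta * (Qk * psi Q)) by (field; lra).
  assert (delta * (Qk * psi Q) <= delta * (M * Q)) by (apply Rmult_le_compat_l; lra).
  assert (delta * (M * Q) <= Qk * Rabs (x - y) * (M * Q))
    by (apply Rmult_le_compat_r; [nra | assumption]).
  lra.
Qed.

(** Bounded repetitions imply bad approximability: the intrinsic denominator is
    comparable to [Q_(n+m)], and [psi] varies slowly. *)
Lemma repetition_bound_badly_approx (w : nat -> nat) (x K : R) :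
  valid_word N w -> coding p r q w x -> repetition_bound w K ->
  badly_symb_approx N p r q psi x.
Proof.
  intros Hw Hx Hrep.
  destruct (periodic_points_far w x K Hw Hx Hrep) as [delta [Hdelta Hfar]].
  destruct (psi_slow (/ 2)) as [c [C [Hc0 [HcC Hslow]]]]; [lra|].
  exists (delta / (2 * C)). split; [apply Rlt_gt, Rdiv_lt_0_compat; lra|].
  intros y w' n m _ Hw' Hy _ [Hper _].
  specialize (Hfar w' n m y Hw' Hper Hy).
  destruct (q_int_comparable p q w' n m (valid_contracting w' Hw') (proj1 Hper))
    as [Hlow [_ Hqi1]].
  set (qi := IZR (q_int p q w' n m)) in *. set (Q := IZR (denom q w' (n + m))) in *.
  assert (HQ : 1 <= Q) by apply (denom_pos_R p q w' _ (valid_contracting w' Hw')).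
  assert (Hpsi : psi qi <= C * psi Q).
  { apply Rle_trans with (psi (/ 2 * Q)); [apply psi_noninc; lra | apply Hslow; lra]. }
  pose proof (Rabs_pos (x - y)).
  apply Rle_ge, (Rmult_le_reg_r (2 * C * qi)); [nra|].
  replace (delta / (2 * C) * psi qi / qi * (2 * C * qi)) with (delta * psi qi)
    by (field; lra).
  assert (delta * psi qi <= delta * (C * psi Q)) by (apply Rmult_le_compat_l; lra).
  assert (C * (delta * psi Q) <= C * (Q * Rabs (x - y)))
    by (apply Rmult_le_compat_l; lra).
  assert (C * (Q * Rabs (x - y)) <= C * (2 * qi * Rabs (x - y)))
    by (apply Rmult_le_compat_l; nra).
  lra.
Qed.

End SeparatedIFS.

Theorem lemma4p3 (N : nat) (p r : nat -> Z) (q : nat -> nat)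
  (HIFS : rational_IFS_SSC N p r q)
  (psi : R -> R) (Hpsi : admissible_psi psi)
  (w : nat -> nat) (Hw : valid_word N w) (x : R) (Hx : coding p r q w x) :
  badly_symb_approx N p r q psi x <->
  exists K : R, forall (l len i j : nat),
    (1 <= len)%nat -> i <> j -> (i + len <= l)%nat -> (j + len <= l)%nat ->
    (forall k, (k < len)%nat -> w (i + k)%nat = w (j + k)%nat) ->
    pseudolength q w i len <= K + Psi psi (pseudolength q w 0 (l - len)).
Proof.
  destruct HIFS as [Hletters [lo [hi [Hlohi [Hinto Hsep]]]]].
  destruct Hpsi as [Hpos [Hnoninc [Hbounded Hslow]]].
  split.
  - apply (badly_approx_repetition_bound N p r q lo hi Hletters Hlohi Hinto psi Hpos
      Hnoninc Hslow w x Hw Hx).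
  - intros [K HK].
    apply (repetition_bound_badly_approx N p r q lo hi Hletters Hlohi Hinto Hsep psi Hpos
      Hnoninc Hbounded Hslow w x K Hw Hx HK).
Qed.
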